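(* Let $R,S$ be outer univalent multirelations $X\leftrightarrow\mathcal{P}Y$. Then $R\sqsubseteq_\uparrow S\iff R\Cup S=S$ and $R\sqsubseteq_\downarrow S\iff R\Cap S=R$.
   Context: $R\Cup S=\{(a,A\cup B)\mid (a,A)\in R,(a,B)\in S\}$, $R\Cap S=\{(a,A\cap B)\mid (a,A)\in R,(a,B)\in S\}$. $R^{\uparrow}=\{(a,A)\mid\exists B.(a,B)\in R\wedge B\subseteq A\}$, $R^{\downarrow}=\{(a,A)\mid\exists B.(a,B)\in R\wedge A\subseteq B\}$; $R\sqsubseteq_\uparrow S\iff S\subseteq R^{\uparrow}$; $R\sqsubseteq_\downarrow S\iff R\subseteq S^{\downarrow}$. $R$ is outer univalent if for each $a\in X$ there is at most one $B$ with $(a,B)\in R$. *)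

From mathcomp Require Import all_boot.
From mathcomp Require Import boolp classical_sets.
Set Implicit Arguments. Unset Strict Implicit. Unset Printing Implicit Defensive.
Local Open Scope classical_set_scope.

Definition mrel (X Y : Type) := set (X * set Y).

Definition mcup X Y (R S : mrel X Y) : mrel X Y :=
  [set p | exists A B, R (p.1, A) /\ S (p.1, B) /\ p.2 = A `|` B].

Definition mcap X Y (R S : mrel X Y) : mrel X Y :=
  [set p | exists A B, R (p.1, A) /\ S (p.1, B) /\ p.2 = A `&` B].

Definition mup X Y (R : mrel X Y) : mrel X Y :=
  [set p | exists B, R (p.1, B) /\ B `<=` p.2].
Definition mdown X Y (R : mrel X Y) : mrel X Y :=
  [set p | exists B, R (p.1, B) /\ p.2 `<=` B].

Definition le_up X Y (R S : mrel X Y) : Prop := S `<=` mup R.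
Definition le_down X Y (R S : mrel X Y) : Prop := R `<=` mdown S.

Definition outer_univalent X Y (R : mrel X Y) : Prop :=
  forall a B C, R (a, B) -> R (a, C) -> B = C.

From mathcomp Require Import all_boot.
From mathcomp Require Import boolp classical_sets.
Local Open Scope classical_set_scope.

(* If R is outer univalent, the set A with (a, A) in R is unique, so the
   witness that (a, B) in S lies in R^up must be that A; hence R below S
   means A `<=` B, i.e. A `|` B = B, for all such pairs.  Dually for the
   downward order, with S outer univalent and A `&` B = A. *)

Section Multirelations.
Variables (X Y : Type).
Implicit Types R S : mrel X Y.

Lemma le_up_mcup R S : outer_univalent R -> le_up R S -> mcup R S = S.
Proof.
move=> uR RS; apply/seteqP; split.
- move=> [a C] [A [B [RA [SB /= ->]]]].
  have [A' [RA' sA'B]] := RS (a, B) SB.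
  by rewrite (uR _ _ _ RA RA') setUidr.
- move=> [a B] SB.
  have [A [RA sAB]] := RS (a, B) SB.
  by exists A, B; rewrite setUidr.
Qed.

Lemma mcup_le_up R S : mcup R S = S -> le_up R S.
Proof.
move=> eqS [a C]; rewrite -{1}eqS => -[A [B [RA [_ /= ->]]]].
by exists A; split => //; apply: subsetUl.
Qed.

Lemma le_down_mcap R S : outer_univalent S -> le_down R S -> mcap R S = R.
Proof.
move=> uS RS; apply/seteqP; split.
- move=> [a C] [A [B [RA [SB /= ->]]]].
  have [B' [SB' sAB']] := RS (a, A) RA.
  by rewrite (uS _ _ _ SB SB') setIidl.
- move=> [a A] RA.
  have [B [SB sAB]] := RS (a, A) RA.
  by exists A, B; rewrite setIidl.
Qed.

Lemma mcap_le_down R S : mcap R S = R -> le_down R S.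
Proof.
move=> eqR [a C]; rewrite -{1}eqR => -[A [B [_ [SB /= ->]]]].
by exists B; split => //; apply: subIsetr.
Qed.

End Multirelations.

Theorem lemma5p9 (X Y : Type) (R S : mrel X Y) :
  outer_univalent R -> outer_univalent S ->
  (le_up R S <-> mcup R S = S) /\ (le_down R S <-> mcap R S = R).
Proof.
move=> uR uS; split; split.
- exact: le_up_mcup.
- exact: mcup_le_up.
- exact: le_down_mcap.
- exact: mcap_le_down.
Qed.
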